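(* Let $q\in\mathbb C_p$ with $|1-q|_p<p^{-1/(p-1)}$ ($p$ an odd prime). For $m,n\in\mathbb Z_+$ with $m\le n$, $$\binom nm(q-1)^m=\sum_{k=m}^n(q-1)^k\binom nk_q s_{1,q}(k,m).$$
   Context: $[x]_q=\frac{1-q^x}{1-q}$; $[n]_q!=[n]_q\cdots[1]_q$ ($[0]_q!=1$), $\binom nk_q=\frac{[n]_q!}{[k]_q![n-k]_q!}$. The $q$-Stirling numbers of the first kind $s_{1,q}(k,l)$ are defined by $[x]_q[x-1]_q\cdots[x-k+1]_q=q^{-\binom k2}\sum_{l=0}^k s_{1,q}(k,l)[x]_q^l$ for $k\in\mathbb Z_+$, as an identity of polynomials in $[x]_q$ (using $[x-i]_q=q^{-i}([x]_q-[i]_q)$). *)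

From HB Require Import structures.
From mathcomp Require Import all_boot all_order all_algebra.
From mathcomp Require Import all_classical all_reals all_analysis.
Set Implicit Arguments. Unset Strict Implicit. Unset Printing Implicit Defensive.
Import Order.TTheory GRing.Theory Num.Theory.
Local Open Scope ring_scope.

(* A model of C_p: a field K with an absolute value abs : K -> R which is
   non-archimedean, normalized by |p| = 1/p, complete, and K algebraically
   closed.  (C_p is such a field.) *)
Definition cauchy_complete (R : realType) (K : fieldType) (abs : K -> R) : Prop :=
  forall u : nat -> K,
    (forall e : R, 0 < e -> exists N : nat, forall m n : nat,
        (N <= m)%N -> (N <= n)%N -> abs (u m - u n) < e) ->
    exists l : K, forall e : R, 0 < e -> exists N : nat, forall n : nat,
        (N <= n)%N -> abs (u n - l) < e.

Definition padic_abs (R : realType) (K : fieldType) (p : nat) (abs : K -> R) : Prop :=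
  (forall x, 0 <= abs x) /\
  (forall x, abs x = 0 <-> x = 0) /\
  (forall x y, abs (x * y) = abs x * abs y) /\
  (forall x y, abs (x + y) <= Num.max (abs x) (abs y)) /\
  abs (p%:R) = (p%:R)^-1 /\
  cauchy_complete abs.

(* [x]_q for x a natural number: (1 - q^x)/(1 - q), written as the
   (division-free) geometric sum 1 + q + ... + q^(x-1)  (= x when q = 1). *)
Definition qnum (K : fieldType) (q : K) (x : nat) : K := \sum_(i < x) q ^+ i.

Definition qfact (K : fieldType) (q : K) (n : nat) : K :=
  \prod_(1 <= i < n.+1) qnum q i.

Definition qbinom (K : fieldType) (q : K) (n k : nat) : K :=
  qfact q n / (qfact q k * qfact q (n - k)).

(* q-Stirling numbers of the first kind: with T = [x]_q and
   [x - i]_q = q^{-i} (T - [i]_q),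
   prod_{i<k} [x-i]_q = q^{-binom k 2} sum_l s_{1,q}(k,l) T^l,
   i.e. s_{1,q}(k,l) is the l-th coefficient of
   q^{binom k 2} * prod_{i<k} q^{-i} (T - [i]_q). *)
Definition qstirling1 (K : fieldType) (q : K) (k l : nat) : K :=
  (q ^+ 'C(k, 2) *: \prod_(i < k) (q ^- i *: ('X - (qnum q i)%:P)))`_l.

From HB Require Import structures.
From mathcomp Require Import all_boot all_order all_algebra.
From mathcomp Require Import all_classical all_reals all_analysis.
From mathcomp Require Import ring.
Import Order.TTheory GRing.Theory Num.Theory.
Set Implicit Arguments. Unset Strict Implicit.
Local Open Scope ring_scope.

(* With T = [x]_q, the T^m-coefficient of P_k(T) = \prod_(i < k) (T - [i]_q) is
   s_{1,q}(k,m).  Since 1 + (q - 1)[k]_q = q^k, multiplication by 1 + (q - 1)T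
   sends P_k to q^k P_k + (q - 1) P_(k+1), so the q-Pascal rule gives
   (1 + (q - 1)T)^n = \sum_k (q - 1)^k [n choose k]_q P_k, and the identity is the
   T^m-coefficient of both sides.  The q-Pascal rule only describes the quotient
   [n]_q! / ([k]_q! [n-k]_q!) when no [i]_q, i > 0, vanishes, i.e. when q is not a
   nontrivial root of unity (and the characteristic is 0).  The p-adic hypothesis,
   |q - 1|^(p-1) < |p|, rules this out: q^d = 1 with p not dividing d forces q = 1
   because d = \sum_(i < d) (1 - q^i) would have norm < 1 = |d|; q^p = 1 forces
   q = 1 because expanding (1 + y)^p = 1 writes p as a sum of terms of norm < |p|;
   the general case follows by induction on d. *)

Lemma coef_expr_1DZX (R : comNzRingType) (c : R) n m : (m <= n)%N ->
  ((1 + c *: 'X) ^+ n)`_m = c ^+ m *+ 'C(n, m).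
Proof.
move=> le_mn; rewrite addrC exprD1n coef_sum (bigD1 (Ordinal (le_mn : m < n.+1)%N)) //=.
rewrite big1 => [|i /negbTE ne_im]; rewrite coefMn exprZn coefZ coefXn.
  by rewrite eqxx mulr1 addr0.
by rewrite eq_sym -(inj_eq val_inj) /= in ne_im; rewrite ne_im mulr0 mul0rn.
Qed.

Section QBinomial.
Variables (K : fieldType) (q : K).

Fixpoint qbinom_rec (n k : nat) : K :=
  match n, k with
  | _, 0 => 1
  | 0, _.+1 => 0
  | n'.+1, k'.+1 => q ^+ k'.+1 * qbinom_rec n' k'.+1 + qbinom_rec n' k'
  end.

Lemma qbinom_rec_small n k : (n < k)%N -> qbinom_rec n k = 0.
Proof.
elim: n k => [|n IH] [|k] //= lt_nk.
by rewrite !IH ?mulr0 ?addr0 // ltnW.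
Qed.

Lemma qbinom_rec0 n : qbinom_rec n 0 = 1.
Proof. by case: n. Qed.

Lemma qfact0 : qfact q 0 = 1.
Proof. by rewrite /qfact big_geq. Qed.

Lemma qfactS n : qfact q n.+1 = qfact q n * qnum q n.+1.
Proof. by rewrite /qfact big_nat_recr. Qed.

Lemma qnumD a b : qnum q (a + b) = qnum q a + q ^+ a * qnum q b.
Proof.
rewrite /qnum big_split_ord /= mulr_sumr; congr (_ + _).
by apply: eq_bigr => i _; rewrite exprD.
Qed.

Lemma qbinom_rec_qfact n k : (k <= n)%N ->
  qbinom_rec n k * qfact q k * qfact q (n - k) = qfact q n.
Proof.
elim: n k => [|n IH] [|k] //=; rewrite ?qfact0 ?subn0 ?mul1r // ltnS subSS => le_kn.
case: (ltngtP k n) le_kn => // [lt_kn|->] _; last first.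
  have := IH n (leqnn n); rewrite subnn qfact0 !mulr1 => IHn.
  by rewrite qbinom_rec_small // mulr0 add0r qfactS mulrA IHn.
have IHk := IH k (ltnW lt_kn).
have IHk1 := IH k.+1 lt_kn.
rewrite -(subnSK lt_kn) qfactS (subnSK lt_kn) in IHk *.
have split_n : (k.+1 + (n - k))%N = n.+1 by rewrite addSn subnKC // ltnW.
rewrite [RHS]qfactS -split_n qnumD mulrDr -{1}IHk -IHk1 qfactS; ring.
Qed.

Lemma qbinomE n k : (forall i, (0 < i)%N -> qnum q i != 0) -> (k <= n)%N ->
  qbinom q n k = qbinom_rec n k.
Proof.
move=> qnum_neq0 le_kn; have qfact_neq0 j : qfact q j != 0.
  rewrite prodf_seq_neq0; apply/allP => i.
  by rewrite mem_index_iota => /andP[/qnum_neq0].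
rewrite /qbinom -(qbinom_rec_qfact le_kn) -(mulrA (qbinom_rec n k)).
by rewrite mulfK // mulf_neq0.
Qed.

Definition qfalling k : {poly K} := \prod_(i < k) ('X - (qnum q i)%:P).

Lemma size_qfalling k : size (qfalling k) = k.+1.
Proof. by rewrite size_prod_XsubC -[index_enum _]enumT size_enum_ord. Qed.

Lemma qstirling1E k l : q != 0 -> qstirling1 q k l = (qfalling k)`_l.
Proof.
move=> q_neq0; rewrite /qstirling1 scaler_prod scalerA prodfV prodrXr.
by rewrite -(big_mkord xpredT (fun i => i)) bin2_sum mulfV ?expf_neq0 ?scale1r.
Qed.

Lemma mulZX_qfalling k :
  (1 + (q - 1) *: 'X) * qfalling k = q ^+ k *: qfalling k + (q - 1) *: qfalling k.+1.
Proof.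
have qnum_geom : (q ^+ k)%:P = 1 + (q - 1)%:P * (qnum q k)%:P.
  by rewrite -polyCM -polyC1 -polyCD /qnum -subrX1 addrC subrK.
by rewrite /qfalling big_ord_recr /= -!mul_polyC qnum_geom; ring.
Qed.

Lemma expr_1DZX_qfalling n :
  (1 + (q - 1) *: 'X) ^+ n =
    \sum_(k < n.+1) ((q - 1) ^+ k * qbinom_rec n k) *: qfalling k.
Proof.
elim: n => [|n IH]; first by rewrite big_ord1 /= mulr1 scale1r /qfalling big_ord0.
rewrite exprS IH mulr_sumr.
under eq_bigr do rewrite -scalerAr mulZX_qfalling scalerDr !scalerA.
rewrite big_split /= [in RHS]big_ord_recl /=.
under [in RHS]eq_bigr do rewrite mulrDr scalerDl.
rewrite big_split /= addrA; congr (_ + _); last first.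
  by apply: eq_bigr => i _; rewrite exprSr mulrAC.
rewrite big_ord_recl big_ord_recr /= add0n (qbinom_rec_small (ltnSn n)).
rewrite !mulr0 scale0r addr0 qbinom_rec0 expr0 !mulr1; congr (_ + _).
by apply: eq_bigr => i _; congr (_ *: _); ring.
Qed.

Lemma binom_qbinom_qstirling1 n m :
  q != 0 -> (forall i, (0 < i)%N -> qnum q i != 0) -> (m <= n)%N ->
  'C(n, m)%:R * (q - 1) ^+ m =
    \sum_(m <= k < n.+1) (q - 1) ^+ k * qbinom q n k * qstirling1 q k m.
Proof.
move=> q_neq0 qnum_neq0 le_mn.
rewrite mulrC mulr_natr -coef_expr_1DZX // expr_1DZX_qfalling coef_sum.
rewrite -(big_mkord xpredT (fun k => (((q - 1) ^+ k * qbinom_rec n k) *: qfalling k)`_m)).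
rewrite (@big_cat_nat _ _ _ m) ?leqW //= [X in X + _]big_nat_cond big1 ?add0r; last first.
  by move=> k /andP[/andP[_ lt_km] _]; rewrite coefZ nth_default ?mulr0 ?size_qfalling.
apply: eq_big_nat => k /andP[_ lt_kn].
by rewrite coefZ qbinomE // qstirling1E.
Qed.

End QBinomial.

Section NonArchimedean.
Variables (R : realType) (K : fieldType) (p : nat) (abs : K -> R).
Hypotheses (abs_p : padic_abs p abs) (p_prime : prime p).

Let abs_ge0 x : 0 <= abs x. Proof. by case: abs_p. Qed.
Let abs_eq0 x : abs x = 0 <-> x = 0. Proof. by case: abs_p => _ []. Qed.
Let absM x y : abs (x * y) = abs x * abs y. Proof. by case: abs_p => _ [_ []]. Qed.
Let abs_ultra x y : abs (x + y) <= Num.max (abs x) (abs y).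
Proof. by case: abs_p => _ [_ [_ []]]. Qed.
Let abs_natp : abs p%:R = p%:R^-1. Proof. by case: abs_p => _ [_ [_ [_ []]]]. Qed.

Lemma abs0 : abs 0 = 0. Proof. exact/abs_eq0. Qed.

Lemma abs1 : abs 1 = 1.
Proof.
have abs1_neq0 : abs 1 != 0 by apply/eqP => /abs_eq0/eqP; rewrite oner_eq0.
by apply: (mulIf abs1_neq0); rewrite mul1r -absM mulr1.
Qed.

Lemma absX x n : abs (x ^+ n) = abs x ^+ n.
Proof. by elim: n => [|n IH]; rewrite ?abs1 // !exprS absM IH. Qed.

Lemma absN x : abs (- x) = abs x.
Proof.
have absN1 : abs (-1) = 1.
  by apply/eqP; rewrite -(@eqrXn2 _ 2) // -absX sqrrN !expr1n abs1.
by rewrite -mulN1r absM absN1 mul1r.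
Qed.

Lemma abs_le_max x y M : abs x <= M -> abs y <= M -> abs (x + y) <= M.
Proof. by move=> le_xM le_yM; rewrite (le_trans (abs_ultra x y)) // ge_max le_xM. Qed.

Lemma abs_lt_max x y M : abs x < M -> abs y < M -> abs (x + y) < M.
Proof. by move=> lt_xM lt_yM; rewrite (le_lt_trans (abs_ultra x y)) // gt_max lt_xM. Qed.

Lemma absD_eqr x y : abs x < abs y -> abs (x + y) = abs y.
Proof.
move=> lt_xy; apply/le_anti/andP; split; first exact: abs_le_max (ltW lt_xy) (lexx _).
have := abs_ultra (y + x) (- x); rewrite addrK absN addrC le_max.
by rewrite (leNgt (abs y) (abs x)) lt_xy orbF.
Qed.

Lemma abs_sum_le (I : Type) (r : seq I) (P : pred I) (F : I -> K) M :
  0 <= M -> (forall i, P i -> abs (F i) <= M) -> abs (\sum_(i <- r | P i) F i) <= M.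
Proof.
move=> M_ge0 F_le; elim/big_rec: _ => [|i x Pi x_le]; first by rewrite abs0.
exact: abs_le_max (F_le i Pi) x_le.
Qed.

Lemma abs_natr_le1 n : abs n%:R <= 1.
Proof.
elim: n => [|n IH]; first by rewrite abs0.
by rewrite -addn1 natrD abs_le_max ?abs1.
Qed.

Lemma abs_natp_gt0 : 0 < abs p%:R.
Proof. by rewrite abs_natp invr_gt0 ltr0n prime_gt0. Qed.

Lemma abs_natp_lt1 : abs p%:R < 1.
Proof. by rewrite abs_natp invf_lt1 ?ltr0n ?prime_gt0 // ltr1n prime_gt1. Qed.

Lemma abs_natr_coprime n : ~~ (p %| n)%N -> abs n%:R = 1.
Proof.
move=> p_ndvd_n; have n_gt0 : (0 < n)%N by case: n p_ndvd_n => //; rewrite dvdn0.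
have /eqP gcd1 : coprime n p by rewrite coprime_sym prime_coprime.
case: (egcdnP p n_gt0) => km kn; rewrite gcd1 => bezout _.
have abs_knp : abs (kn * p)%:R < abs 1.
  by rewrite abs1 natrM absM (le_lt_trans _ abs_natp_lt1) // ler_piMl ?abs_natr_le1.
have := absD_eqr abs_knp; rewrite natr1 -addn1 -bezout abs1 natrM absM => abs_kmn.
apply/le_anti; rewrite abs_natr_le1 -{1}abs_kmn ler_piMl ?abs_natr_le1 //.
Qed.

Lemma natr_neq0 n : (0 < n)%N -> n%:R != 0 :> K.
Proof.
have abs_neq0 x : abs x != 0 -> x != 0 by apply: contraNneq => ->; rewrite abs0.
elim/ltn_ind: n => n IH n_gt0; have [p_dvd_n | p_ndvd_n] := boolP (p %| n)%N.
  rewrite -(divnK p_dvd_n) natrM mulf_neq0 //; last first.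
    by rewrite abs_neq0 // gt_eqF ?abs_natp_gt0.
  apply: IH; first by rewrite ltn_Pdiv // ?prime_gt1.
  by rewrite divn_gt0 ?prime_gt0 // dvdn_leq.
by rewrite abs_neq0 // abs_natr_coprime ?oner_eq0.
Qed.

Lemma abs_lt1_of_small x : abs x ^+ p.-1 < abs p%:R -> abs x < 1.
Proof.
apply: contraTlt => /(exprn_ege1 p.-1) le1_x.
by rewrite -leNgt (le_trans (ltW abs_natp_lt1)).
Qed.

Lemma abs_expr_sub1 x j : abs (x - 1) <= 1 -> abs (x ^+ j - 1) <= abs (x - 1).
Proof.
move=> le1; have abs_x_le1 : abs x <= 1 by rewrite -(subrK 1 x) abs_le_max ?abs1.
rewrite subrX1 absM ler_piMr ?abs_ge0 //.
by apply: abs_sum_le => // i _; rewrite absX exprn_ile1.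
Qed.

Lemma expr_eq1_coprime x d :
  ~~ (p %| d)%N -> x ^+ d = 1 -> abs (x - 1) < 1 -> x = 1.
Proof.
move=> p_ndvd_d xd1 lt1; apply/eqP/contraT => x_neq1.
have geom0 : \sum_(i < d) x ^+ i = 0.
  apply/eqP; move: (subrX1 x d); rewrite xd1 subrr => /esym/eqP.
  by rewrite mulf_eq0 subr_eq0 (negbTE x_neq1).
have d_sum : d%:R = - \sum_(i < d) (x ^+ i - 1).
  by rewrite sumrB geom0 sumr_const card_ord sub0r opprK.
have : abs (\sum_(i < d) (x ^+ i - 1)) <= abs (x - 1).
  by apply: abs_sum_le => // i _; exact: abs_expr_sub1 (ltW lt1).
by rewrite -absN -d_sum abs_natr_coprime // leNgt lt1.
Qed.

Lemma abs_binom_prime j : (0 < j < p)%N -> abs 'C(p, j)%:R <= abs p%:R.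
Proof.
move=> /(prime_dvd_bin p_prime)/divnK <-.
by rewrite natrM absM ler_piMl ?abs_natr_le1.
Qed.

Lemma expr_p_eq1 w : w ^+ p = 1 -> abs (w - 1) ^+ p.-1 < abs p%:R -> w = 1.
Proof.
move=> wp1 small; apply/eqP; rewrite -subr_eq0; apply/contraT.
set y := w - 1 => y_neq0.
have abs_y_lt1 := abs_lt1_of_small small.
have [p' p_eq] : exists p', p = p'.+2 by exists (p - 2)%N; rewrite -addn2 subnK ?prime_gt1.
have binom0 : \sum_(i < p'.+2) y ^+ i *+ 'C(p, i.+1) = 0.
  have := exprD1n y p; rewrite subrK wp1 big_ord_recl expr0 bin0 mulr1n.
  move=> /esym; rewrite -[RHS]addr0 => /addrI/eqP.
  rewrite (eq_bigr (fun i : 'I_p => y * (y ^+ i *+ 'C(p, i.+1)))) => [|i _]; last first.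
    by rewrite lift0 exprS mulrnAr.
  by rewrite -mulr_sumr mulf_eq0 (negbTE y_neq0) -p_eq => /eqP.
move: binom0; rewrite big_ord_recl big_ord_recr /= /bump !add1n bin1 expr0.
rewrite -p_eq binn mulr1n => /eqP; rewrite addr_eq0 => /eqP p_sum.
set mid := \sum_(i < p') _ in p_sum.
have abs_mid : abs mid < abs p%:R.
  apply: le_lt_trans (_ : abs p%:R * abs y < _); last first.
    by rewrite gtr_pMr ?abs_natp_gt0.
  apply: abs_sum_le => [|i _]; first by rewrite mulr_ge0.
  rewrite leq0n add1n -mulr_natl absM absX ler_pM ?exprn_ge0 //.
    by rewrite abs_binom_prime // p_eq !ltnS /=.
  by rewrite exprS ler_piMr ?exprn_ile1 // ltW.
have abs_last : abs (y ^+ p'.+1) < abs p%:R by rewrite absX -[p'.+1]/(p'.+2.-1) -p_eq.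
by have := abs_lt_max abs_mid abs_last; rewrite -absN -p_sum ltxx.
Qed.

Lemma expr_eq1_small x d : (0 < d)%N -> x ^+ d = 1 ->
  abs (x - 1) ^+ p.-1 < abs p%:R -> x = 1.
Proof.
move=> + + small; have lt1 := abs_lt1_of_small small.
elim/ltn_ind: d => d IH d_gt0 xd1; have [p_dvd_d | ] := boolP (p %| d)%N; last first.
  by move=> p_ndvd_d; exact: expr_eq1_coprime p_ndvd_d xd1 lt1.
have lt_dp_d : (d %/ p < d)%N by rewrite ltn_Pdiv // prime_gt1.
have dp_gt0 : (0 < d %/ p)%N by rewrite divn_gt0 ?prime_gt0 // dvdn_leq.
apply: IH lt_dp_d dp_gt0 _; apply: expr_p_eq1; first by rewrite -exprM divnK.
apply: le_lt_trans small; rewrite lerXn2r ?nnegrE ?abs_ge0 //.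
exact: abs_expr_sub1 (ltW lt1).
Qed.

Lemma qnum_neq0_small x i :
  abs (x - 1) ^+ p.-1 < abs p%:R -> (0 < i)%N -> qnum x i != 0.
Proof.
move=> small i_gt0; have [-> | x_neq1] := eqVneq x 1.
  rewrite /qnum (eq_bigr (fun=> 1)) => [|j _]; last by rewrite expr1n.
  by rewrite sumr_const card_ord natr_neq0.
apply: contra_neq x_neq1 => qnum0; apply: (expr_eq1_small i_gt0) small.
by apply/eqP; rewrite -subr_eq0 subrX1 -/(qnum x i) qnum0 mulr0.
Qed.

Lemma neq0_small x : abs (x - 1) ^+ p.-1 < abs p%:R -> x != 0.
Proof.
move=> /abs_lt1_of_small; apply: contraTneq => ->.
by rewrite sub0r absN abs1 ltxx.
Qed.

End NonArchimedean.

Lemma powR_Nrecip_exprn (R : realType) (x : R) n : 0 <= x -> (0 < n)%N ->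
  (x `^ (- n%:R^-1)) ^+ n = x^-1.
Proof.
move=> x_ge0 n_gt0; rewrite -powR_mulrn ?powR_ge0 // -powRrM mulNr mulVf ?powR_inv1 //.
by rewrite pnatr_eq0 -lt0n.
Qed.

Theorem mainTheorem3 (R : realType) (K : closedFieldType) (p : nat)
    (abs : K -> R) (q : K) (m n : nat) :
  prime p -> odd p -> padic_abs p abs ->
  abs (1 - q) < (p%:R : R) `^ (- (p%:R - 1)^-1) ->
  (m <= n)%N ->
  'C(n, m)%:R * (q - 1) ^+ m =
    \sum_(m <= k < n.+1) (q - 1) ^+ k * qbinom q n k * qstirling1 q k m.
Proof.
move=> p_prime _ abs_p lt_q le_mn.
have p1_gt0 : (0 < p.-1)%N by rewrite -subn1 subn_gt0 prime_gt1.
have small : abs (q - 1) ^+ p.-1 < abs p%:R.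
  have [abs_ge0 [_ [_ [_ [-> _]]]]] := abs_p.
  rewrite -(natrB _ (prime_gt0 p_prime)) subn1 -opprB (absN abs_p) in lt_q.
  by rewrite -(powR_Nrecip_exprn (ler0n R p) p1_gt0) ltrXn2r ?abs_ge0 -?lt0n.
have q_neq0 := neq0_small abs_p p_prime small.
have qnum_neq0 i := qnum_neq0_small abs_p p_prime (i := i) small.
exact: binom_qbinom_qstirling1 q_neq0 qnum_neq0 le_mn.
Qed.
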